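(* Let $A$ be a unital algebra over $\mathbb{F}_2$ and let $\Omega^1$ extend to an exterior algebra $\Omega$ over $A$ at least up to degree 2 (product $\wedge$, differential ${\rm d}$ with ${\rm d}^2=0$ and graded Leibniz rule, generated by $A$ and ${\rm d} A$), and let $\theta\in\Omega^1$ satisfy ${\rm d}\theta=0$. Let $\bar A$ and $\bar\Omega^1$ be as follows: $\bar A$ is the set $A$ with $a\,\bar\cdot\,b=ab+a+b$, $a\,\bar+\,b=a+b+1$; $\bar\Omega^1$ is the set $\Omega^1$ with $\omega\,\bar+\,\eta=\theta+\omega+\eta$, $a\,\bar\cdot\,\omega=a\theta+(a+1)\omega$, $\omega\,\bar\cdot\,a=\theta a+\omega(a+1)$ and $\bar{\rm d} a=\theta+{\rm d} a$. (i) Let $\bar\Omega^2$ be the set $\Omega^2$ with $\omega\,\bar+\,\eta=\theta^2+\omega+\eta$, $a\,\bar\cdot\,\omega=a\theta^2+(a+1)\omega$, $\omega\,\bar\cdot\,a=\theta^2a+\omega(a+1)$ for $\omega,\eta\in\Omega^2$, $a\in A$, with product $\bar\Omega^1\times\bar\Omega^1\to\bar\Omega^2$ given by $\omega\,\bar\wedge\,\eta=\omega\wedge\eta+\theta\wedge\eta+\omega\wedge\theta$, and with $\bar{\rm d}\omega=\theta^2+{\rm d}\omega$ for $\omega\in\bar\Omega^1$ (where $\theta^2=\theta\wedge\theta$). Then $\bar A,\bar\Omega^1,\bar\Omega^2$ with these structures form the part up to degree 2 of an exterior algebra over $\bar A$. (ii) The map $\bar{\ }:\Omega^2\to\bar\Omega^2$,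 $\bar\omega=\theta^2+\omega$, together with $a\mapsto 1+a$ on $A$ and $\omega\mapsto\theta+\omega$ on $\Omega^1$, is a map of differential graded algebras up to degree 2.
   Context: Over $\mathbb{F}_2$ all signs in the graded Leibniz rule are irrelevant. A map of differential graded algebras up to degree 2 here means maps in degrees 0,1,2 that are additive, intertwine the products (including $\overline{\omega\wedge\eta}=\bar\omega\,\bar\wedge\,\bar\eta$ and the bimodule actions) and intertwine the differentials ($\overline{{\rm d} a}=\bar{\rm d}\bar a$, $\overline{{\rm d}\omega}=\bar{\rm d}\bar\omega$). *)

From Stdlib Require Import List.
Import ListNotations.

(* All operations are fields, so that the "barred" structures of the paper
   (same carriers, new operations) are again instances of this record. *)
Record dga2_ops (A O1 O2 : Type) := Dga2Ops {
  addA : A -> A -> A;  mulA : A -> A -> A;  zeroA : A;  oneA : A;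
  add1 : O1 -> O1 -> O1;  zero1 : O1;
  lmul1 : A -> O1 -> O1;  rmul1 : O1 -> A -> O1;
  add2 : O2 -> O2 -> O2;  zero2 : O2;
  lmul2 : A -> O2 -> O2;  rmul2 : O2 -> A -> O2;
  wedge : O1 -> O1 -> O2;
  dA : A -> O1;  d1 : O1 -> O2 }.

Arguments Dga2Ops {A O1 O2}.
Arguments addA {A O1 O2}. Arguments mulA {A O1 O2}. Arguments zeroA {A O1 O2}.
Arguments oneA {A O1 O2}. Arguments add1 {A O1 O2}. Arguments zero1 {A O1 O2}.
Arguments lmul1 {A O1 O2}. Arguments rmul1 {A O1 O2}. Arguments add2 {A O1 O2}.
Arguments zero2 {A O1 O2}. Arguments lmul2 {A O1 O2}. Arguments rmul2 {A O1 O2}.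
Arguments wedge {A O1 O2}. Arguments dA {A O1 O2}. Arguments d1 {A O1 O2}.

Definition span1 {A O1 O2} (D : dga2_ops A O1 O2) (s : list (A * A)) : O1 :=
  fold_right (fun p acc => add1 D (lmul1 D (fst p) (dA D (snd p))) acc) (zero1 D) s.

Definition span2 {A O1 O2} (D : dga2_ops A O1 O2) (s : list (A * A * A)) : O2 :=
  fold_right (fun p acc =>
      add2 D (lmul2 D (fst (fst p)) (wedge D (dA D (snd (fst p))) (dA D (snd p)))) acc)
    (zero2 D) s.

(* Axioms: part up to degree 2 of an exterior algebra (DGA generated by A and dA)
   over a unital F_2-algebra A.  Over F_2 all signs are irrelevant. *)
Record is_dga2 {A O1 O2} (D : dga2_ops A O1 O2) : Prop := {
  (* A : unital ring of characteristic 2 (= unital F_2-algebra) *)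
  A_addA : forall a b c, addA D a (addA D b c) = addA D (addA D a b) c;
  A_addC : forall a b, addA D a b = addA D b a;
  A_add0 : forall a, addA D a (zeroA D) = a;
  A_char2 : forall a, addA D a a = zeroA D;
  A_mulA : forall a b c, mulA D a (mulA D b c) = mulA D (mulA D a b) c;
  A_mul1l : forall a, mulA D (oneA D) a = a;
  A_mul1r : forall a, mulA D a (oneA D) = a;
  A_mulDl : forall a b c, mulA D (addA D a b) c = addA D (mulA D a c) (mulA D b c);
  A_mulDr : forall a b c, mulA D a (addA D b c) = addA D (mulA D a b) (mulA D a c);
  O1_addA : forall x y z, add1 D x (add1 D y z) = add1 D (add1 D x y) z;
  O1_addC : forall x y, add1 D x y = add1 D y x;
  O1_add0 : forall x, add1 D x (zero1 D) = x;
  O1_char2 : forall x, add1 D x x = zero1 D;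
  O1_lDa : forall a b x, lmul1 D (addA D a b) x = add1 D (lmul1 D a x) (lmul1 D b x);
  O1_lDx : forall a x y, lmul1 D a (add1 D x y) = add1 D (lmul1 D a x) (lmul1 D a y);
  O1_lM : forall a b x, lmul1 D (mulA D a b) x = lmul1 D a (lmul1 D b x);
  O1_l1 : forall x, lmul1 D (oneA D) x = x;
  O1_rDa : forall a b x, rmul1 D x (addA D a b) = add1 D (rmul1 D x a) (rmul1 D x b);
  O1_rDx : forall a x y, rmul1 D (add1 D x y) a = add1 D (rmul1 D x a) (rmul1 D y a);
  O1_rM : forall a b x, rmul1 D x (mulA D a b) = rmul1 D (rmul1 D x a) b;
  O1_r1 : forall x, rmul1 D x (oneA D) = x;
  O1_lr : forall a b x, rmul1 D (lmul1 D a x) b = lmul1 D a (rmul1 D x b);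
  O2_addA : forall x y z, add2 D x (add2 D y z) = add2 D (add2 D x y) z;
  O2_addC : forall x y, add2 D x y = add2 D y x;
  O2_add0 : forall x, add2 D x (zero2 D) = x;
  O2_char2 : forall x, add2 D x x = zero2 D;
  O2_lDa : forall a b x, lmul2 D (addA D a b) x = add2 D (lmul2 D a x) (lmul2 D b x);
  O2_lDx : forall a x y, lmul2 D a (add2 D x y) = add2 D (lmul2 D a x) (lmul2 D a y);
  O2_lM : forall a b x, lmul2 D (mulA D a b) x = lmul2 D a (lmul2 D b x);
  O2_l1 : forall x, lmul2 D (oneA D) x = x;
  O2_rDa : forall a b x, rmul2 D x (addA D a b) = add2 D (rmul2 D x a) (rmul2 D x b);
  O2_rDx : forall a x y, rmul2 D (add2 D x y) a = add2 D (rmul2 D x a) (rmul2 D y a);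
  O2_rM : forall a b x, rmul2 D x (mulA D a b) = rmul2 D (rmul2 D x a) b;
  O2_r1 : forall x, rmul2 D x (oneA D) = x;
  O2_lr : forall a b x, rmul2 D (lmul2 D a x) b = lmul2 D a (rmul2 D x b);
  W_Dl : forall x y z, wedge D (add1 D x y) z = add2 D (wedge D x z) (wedge D y z);
  W_Dr : forall x y z, wedge D x (add1 D y z) = add2 D (wedge D x y) (wedge D x z);
  W_l : forall a x y, wedge D (lmul1 D a x) y = lmul2 D a (wedge D x y);
  W_r : forall a x y, wedge D x (rmul1 D y a) = rmul2 D (wedge D x y) a;
  W_mid : forall a x y, wedge D (rmul1 D x a) y = wedge D x (lmul1 D a y);
  dA_add : forall a b, dA D (addA D a b) = add1 D (dA D a) (dA D b);
  dA_Leibniz : forall a b,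
    dA D (mulA D a b) = add1 D (rmul1 D (dA D a) b) (lmul1 D a (dA D b));
  d1_add : forall x y, d1 D (add1 D x y) = add2 D (d1 D x) (d1 D y);
  d1_Leibniz_l : forall a x,
    d1 D (lmul1 D a x) = add2 D (wedge D (dA D a) x) (lmul2 D a (d1 D x));
  d1_Leibniz_r : forall a x,
    d1 D (rmul1 D x a) = add2 D (rmul2 D (d1 D x) a) (wedge D x (dA D a));
  dd0 : forall a, d1 D (dA D a) = zero2 D;
  gen1 : forall x : O1, exists s, x = span1 D s;
  gen2 : forall w : O2, exists s, w = span2 D s }.

Record is_dga2_map {A O1 O2 B P1 P2}
    (D : dga2_ops A O1 O2) (E : dga2_ops B P1 P2)
    (f0 : A -> B) (f1 : O1 -> P1) (f2 : O2 -> P2) : Prop := {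
  f0_add : forall a b, f0 (addA D a b) = addA E (f0 a) (f0 b);
  f1_add : forall x y, f1 (add1 D x y) = add1 E (f1 x) (f1 y);
  f2_add : forall x y, f2 (add2 D x y) = add2 E (f2 x) (f2 y);
  f0_mul : forall a b, f0 (mulA D a b) = mulA E (f0 a) (f0 b);
  f1_lmul : forall a x, f1 (lmul1 D a x) = lmul1 E (f0 a) (f1 x);
  f1_rmul : forall a x, f1 (rmul1 D x a) = rmul1 E (f1 x) (f0 a);
  f2_lmul : forall a x, f2 (lmul2 D a x) = lmul2 E (f0 a) (f2 x);
  f2_rmul : forall a x, f2 (rmul2 D x a) = rmul2 E (f2 x) (f0 a);
  f2_wedge : forall x y, f2 (wedge D x y) = wedge E (f1 x) (f1 y);
  f_dA : forall a, f1 (dA D a) = dA E (f0 a);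
  f_d1 : forall x, f2 (d1 D x) = d1 E (f1 x) }.

Definition bar_ops {A O1 O2} (D : dga2_ops A O1 O2) (theta : O1) : dga2_ops A O1 O2 :=
  let th2 := wedge D theta theta in
  let a1 a := addA D a (oneA D) in
  Dga2Ops
    (fun a b => addA D (addA D a b) (oneA D))
    (fun a b => addA D (addA D (mulA D a b) a) b)
    (oneA D)                                                   (* bar zero = 1 *)
    (zeroA D)                                                  (* bar one = 0 *)
    (fun x y => add1 D (add1 D theta x) y)
    theta
    (fun a x => add1 D (lmul1 D a theta) (lmul1 D (a1 a) x))
    (fun x a => add1 D (rmul1 D theta a) (rmul1 D x (a1 a)))
    (fun x y => add2 D (add2 D th2 x) y)
    th2
    (fun a x => add2 D (lmul2 D a th2) (lmul2 D (a1 a) x))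
    (fun x a => add2 D (rmul2 D th2 a) (rmul2 D x (a1 a)))
    (fun x y => add2 D (add2 D (wedge D x y) (wedge D theta y)) (wedge D x theta))
    (fun a => add1 D theta (dA D a))
    (fun x => add2 D th2 (d1 D x)).

(* The three maps a |-> 1 + a, w |-> theta + w, w |-> theta^2 + w are bijections
   (translations in F_2-vector spaces), and the barred operations are exactly the
   original ones conjugated by them; d theta = 0 is what makes them intertwine
   the differentials.  So one checks (ii) directly, and (i) follows because every
   axiom of an exterior algebra up to degree 2 is transported along a surjective
   map of such structures preserving zeros and the unit. *)

From Stdlib Require Import List FinFun.

Record char2_group {G} (add : G -> G -> G) (z : G) : Prop := {
  c2_addA : forall x y w, add x (add y w) = add (add x y) w;
  c2_addC : forall x y, add x y = add y x;
  c2_add0 : forall x, add x z = x;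
  c2_add_self : forall x, add x x = z }.

Section Char2Group.

Context {G : Type} {add : G -> G -> G} {z : G} (HG : char2_group add z).

Lemma addKx x y : add x (add x y) = y.
Proof.
  destruct HG as [addA addC add0 add_self].
  rewrite addA, add_self, addC, add0. reflexivity.
Qed.

Lemma addCA x y w : add x (add y w) = add y (add x w).
Proof. rewrite !(c2_addA _ _ HG), (c2_addC _ _ HG x y). reflexivity. Qed.

Lemma addKA_l x a b : add (add x a) (add x b) = add a b.
Proof. rewrite <- (c2_addA _ _ HG), (addCA a x b), addKx. reflexivity. Qed.

Lemma addKA_mid x a b : add (add x a) (add a b) = add x b.
Proof. rewrite <- (c2_addA _ _ HG), addKx. reflexivity. Qed.

Lemma addKA_outer p q r : add (add (add p q) r) p = add q r.
Proof. rewrite (c2_addC _ _ HG), <- !(c2_addA _ _ HG), addKx. reflexivity. Qed.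

Lemma addKA_cross u v w : add (add u v) (add w u) = add w v.
Proof. rewrite (c2_addC _ _ HG w u), addKA_l, (c2_addC _ _ HG). reflexivity. Qed.

Lemma add_translation_surjective c : Surjective (add c).
Proof. intro y. exists (add c y). apply addKx. Qed.

End Char2Group.

Section Char2Parts.

Context {A O1 O2 : Type} {D : dga2_ops A O1 O2} (HD : is_dga2 D).

Lemma is_dga2_char2_A : char2_group (addA D) (zeroA D).
Proof. destruct HD; constructor; assumption. Qed.

Lemma is_dga2_char2_O1 : char2_group (add1 D) (zero1 D).
Proof. destruct HD; constructor; assumption. Qed.

Lemma is_dga2_char2_O2 : char2_group (add2 D) (zero2 D).
Proof. destruct HD; constructor; assumption. Qed.

End Char2Parts.

Lemma dA_oneA {A O1 O2} (D : dga2_ops A O1 O2) :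
  is_dga2 D -> dA D (oneA D) = zero1 D.
Proof.
  intro HD.
  pose proof (dA_Leibniz D HD (oneA D) (oneA D)) as H.
  rewrite (A_mul1l D HD), (O1_r1 D HD), (O1_l1 D HD), (O1_char2 D HD) in H.
  exact H.
Qed.

Section Transport.

Context {A O1 O2 B P1 P2 : Type} {D : dga2_ops A O1 O2} {E : dga2_ops B P1 P2}.
Context {f0 : A -> B} {f1 : O1 -> P1} {f2 : O2 -> P2}.
Hypothesis Hm : is_dga2_map D E f0 f1 f2.
Hypothesis f1_zero : f1 (zero1 D) = zero1 E.
Hypothesis f2_zero : f2 (zero2 D) = zero2 E.

Lemma map_span1 s :
  f1 (span1 D s) = span1 E (map (fun p => (f0 (fst p), f0 (snd p))) s).
Proof.
  induction s as [|p s IH]; simpl; [exact f1_zero|].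
  rewrite (f1_add _ _ _ _ _ Hm), (f1_lmul _ _ _ _ _ Hm), (f_dA _ _ _ _ _ Hm), IH.
  reflexivity.
Qed.

Lemma map_span2 s :
  f2 (span2 D s) =
  span2 E (map (fun p => (f0 (fst (fst p)), f0 (snd (fst p)), f0 (snd p))) s).
Proof.
  induction s as [|p s IH]; simpl; [exact f2_zero|].
  rewrite (f2_add _ _ _ _ _ Hm), (f2_lmul _ _ _ _ _ Hm), (f2_wedge _ _ _ _ _ Hm),
    !(f_dA _ _ _ _ _ Hm), IH.
  reflexivity.
Qed.

Hypothesis f0_zero : f0 (zeroA D) = zeroA E.
Hypothesis f0_one : f0 (oneA D) = oneA E.
Hypotheses (f0_surj : Surjective f0) (f1_surj : Surjective f1) (f2_surj : Surjective f2).

Lemma is_dga2_surjective_image : is_dga2 D -> is_dga2 E.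
Proof.
  intro HD.
  destruct Hm as [m0 m1 m2 m3 m4 m5 m6 m7 m8 m9 m10].
  pose proof HD as HD'; destruct HD'.
  (* Write every variable as an image, fold the expression into the image of a
     D-expression, and conclude by the corresponding axiom of D. *)
  constructor;
  try (intros;
       repeat match goal with
       | x : B |- _ => destruct (f0_surj x) as [? <-]; clear x
       | x : P1 |- _ => destruct (f1_surj x) as [? <-]; clear x
       | x : P2 |- _ => destruct (f2_surj x) as [? <-]; clear x
       end;
       rewrite <- ?f0_zero, <- ?f0_one, <- ?f1_zero, <- ?f2_zero;
       repeat (rewrite <- m0 || rewrite <- m1 || rewrite <- m2 || rewrite <- m3 ||
               rewrite <- m4 || rewrite <- m5 || rewrite <- m6 || rewrite <- m7 ||
               rewrite <- m8 || rewrite <- m9 || rewrite <- m10);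
       apply f_equal; auto; fail).
  - intro x. destruct (f1_surj x) as [y <-]. destruct (gen1 y) as [s ->].
    eexists. apply map_span1.
  - intro x. destruct (f2_surj x) as [y <-]. destruct (gen2 y) as [s ->].
    eexists. apply map_span2.
Qed.

End Transport.

Lemma bar_shift_is_dga2_map (A O1 O2 : Type) (D : dga2_ops A O1 O2) (theta : O1) :
  is_dga2 D ->
  d1 D theta = zero2 D ->
  is_dga2_map D (bar_ops D theta)
    (fun a => addA D (oneA D) a)
    (fun w => add1 D theta w)
    (fun w => add2 D (wedge D theta theta) w).
Proof.
  intros HD dtheta.
  pose proof (dA_oneA D HD) as dA1.
  pose proof (is_dga2_char2_A HD) as GA.
  pose proof (is_dga2_char2_O1 HD) as G1.
  pose proof (is_dga2_char2_O2 HD) as G2.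
  destruct HD.
  assert (one_shift_inv : forall a, addA D (addA D (oneA D) a) (oneA D) = a).
  { intro a. rewrite A_addC, (addKx GA). reflexivity. }
  constructor; intros; simpl.
  - rewrite (addKA_l GA), A_addC. reflexivity.
  - rewrite (addKx G1), (addCA G1). reflexivity.
  - rewrite (addKx G2), (addCA G2). reflexivity.
  - rewrite A_mulDl, A_mul1l, A_mulDr, A_mul1r, (addKA_outer GA), (addKA_cross GA).
    reflexivity.
  - rewrite one_shift_inv, O1_lDa, O1_l1, O1_lDx, (addKA_mid G1). reflexivity.
  - rewrite one_shift_inv, O1_rDa, O1_r1, O1_rDx, (addKA_mid G1). reflexivity.
  - rewrite one_shift_inv, O2_lDa, O2_l1, O2_lDx, (addKA_mid G2). reflexivity.
  - rewrite one_shift_inv, O2_rDa, O2_r1, O2_rDx, (addKA_mid G2). reflexivity.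
  - rewrite !W_Dl, !W_Dr, (O2_addC _ (add2 D (wedge D theta theta) (wedge D theta y))),
      (addKx G2), (addKA_cross G2).
    reflexivity.
  - rewrite dA_add, dA1, (O1_addC (zero1 D)), O1_add0. reflexivity.
  - rewrite d1_add, dtheta, (O2_addC (zero2 D)), O2_add0. reflexivity.
Qed.

Theorem lemma5p4 (A O1 O2 : Type) (D : dga2_ops A O1 O2) (theta : O1) :
  is_dga2 D ->
  d1 D theta = zero2 D ->
  is_dga2 (bar_ops D theta) /\
  is_dga2_map D (bar_ops D theta)
    (fun a => addA D (oneA D) a)
    (fun w => add1 D theta w)
    (fun w => add2 D (wedge D theta theta) w).
Proof.
  intros HD dtheta.
  pose proof (bar_shift_is_dga2_map A O1 O2 D theta HD dtheta) as Hm.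
  split; [|exact Hm].
  apply (is_dga2_surjective_image Hm); simpl.
  - apply (O1_add0 D HD).
  - apply (O2_add0 D HD).
  - apply (A_add0 D HD).
  - apply (A_char2 D HD).
  - exact (add_translation_surjective (is_dga2_char2_A HD) _).
  - exact (add_translation_surjective (is_dga2_char2_O1 HD) _).
  - exact (add_translation_surjective (is_dga2_char2_O2 HD) _).
  - exact HD.
Qed.
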